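(* Let $a,b\in\mathbb{Z}$ with $a<b$, $\mathbf{x}\in\mathbb{Z}^m$ with $x_1\le\dots\le x_m$, and $\mathbf{y}\in(\mathbb{Z}')^n$ with $y_1\le\dots\le y_n$, where $\mathbb{Z}'=\mathbb{Z}+1/2$. Let $\mathbf{X}=(X_1,\dots,X_m)$ be an $m$-dimensional simple coalescing random walk on $\mathbb{Z}$ started at $\mathbf{x}$ and absorbed at $a$ and at $b$, and let $\mathbf{Y}=(Y_1,\dots,Y_n)$ be an $n$-dimensional simple coalescing random walk on $\mathbb{Z}'$ started at $\mathbf{y}$ and reflected at $a$ and $b$. Put $I^{\rightarrow}_{ij}(t,\mathbf{y})=1_{]y_j,y_{j+1}]}(X_i(t))$ and $I^{\leftarrow}_{ij}(t,\mathbf{x})=1_{]Y_j(t),Y_{j+1}(t)]}(x_i)$ for $1\le i\le m$, $1\le j\le n-1$. Then for each $t\ge0$ the joint distribution of the $m\times(n-1)$ random array $(I^{\rightarrow}_{ij}(t,\mathbf{Y}(0)))$ coincides with that of $(I^{\leftarrow}_{ij}(t,\mathbf{X}(0)))$.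
   Context: A simple coalescing random walk on $\mathbb{Z}$ (resp. $\mathbb{Z}'$) is a system of particles indexed $1,\dots,m$ in increasing order of initial positions, each free particle performing a continuous-time symmetric simple random walk jumping at total rate one (rate $1/2$ to each neighbour), independently, except that particles that occupy the same site coalesce and move together thereafter. Absorbed at $a$ and $b$: a particle that hits $a$ or $b$ stays there forever (it no longer jumps). Reflected at $a$ (for the walk on $\mathbb{Z}'$): each particle stays on the same side of $a$; a particle at $a-1/2$ jumps to $a-3/2$ at rate $1/2$ and its jump to the right is suppressed (it stays), and symmetrically a particle at $a+1/2$ jumps to $a+3/2$ at rate $1/2$ and its jump to the left is suppressed; otherwise it moves as a simple coalescing random walk. Reflection at two points $a<b$ is defined analogously at each point. *)

From HB Require Import structures.
From mathcomp Require Import all_boot all_order all_algebra.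
From mathcomp Require Import all_classical all_reals all_analysis.
Set Implicit Arguments. Unset Strict Implicit. Unset Printing Implicit Defensive.
Import Order.TTheory GRing.Theory Num.Theory.
Import numFieldNormedType.Exports.
Local Open Scope ring_scope.

(* A configuration of a coalescing walk with k particles is a seq int of size k:
   entry i = position of particle i.  For walks on Z' = Z + 1/2 the integer k
   encodes the half-integer site k + 1/2. *)

Definition moveAt (s : seq int) (z d : int) : seq int :=
  [seq (if w == z then w + d else w) | w <- s].

(* One step of the uniformized jump chain (uniformization rate lam, which must
   dominate the total jump rate): a finite list of (probability, next state).
   Each occupied site z (a cluster of coalesced particles) jumps at total rate 1,
   rate 1/2 to each neighbour. *)

Definition stepX (R : realType) (a b : int) (lam : R) (s : seq int)
  : seq (R * seq int) :=
  let F := undup [seq z <- s | (z != a) && (z != b)] in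
  (1 - (size F)%:R / lam, s) ::
  flatten [seq [:: ((2 * lam)^-1, moveAt s z 1); ((2 * lam)^-1, moveAt s z (-1))]
          | z <- F].

(* Walk on Z' (site k encodes k + 1/2) reflected at a and b: a jump crossing
   the point a or b is suppressed (the particle stays). The jump k -> k+1 crosses
   the point k+1, the jump k -> k-1 crosses the point k. *)
Definition stepY (R : realType) (a b : int) (lam : R) (s : seq int)
  : seq (R * seq int) :=
  let F := undup s in
  (1 - (size F)%:R / lam, s) ::
  flatten [seq [:: ((2 * lam)^-1,
                    if (z + 1 == a) || (z + 1 == b) then s else moveAt s z 1);
                   ((2 * lam)^-1,
                    if (z == a) || (z == b) then s else moveAt s z (-1))]
          | z <- F].

Fixpoint distK (R : realType) (step : seq int -> seq (R * seq int)) (k : nat)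
  (s0 : seq int) : seq (R * seq int) :=
  match k with
  | 0 => [:: (1, s0)]
  | k'.+1 => flatten [seq [seq (p.1 * q.1, q.2) | q <- step p.2]
                     | p <- distK step k' s0]
  end.

Definition probK (R : realType) (step : seq int -> seq (R * seq int)) (k : nat)
  (s0 : seq int) (E : pred (seq int)) : R :=
  \sum_(p <- distK step k s0) p.1 * (E p.2)%:R.

(* Law at time t of the continuous-time Markov chain with jump kernel given by
   uniformization at rate lam:  P(Z(t) in E) =
   sum_k e^{-lam t} (lam t)^k / k! * P(jump chain after k steps in E). *)
Definition ctmc_prob (R : realType) (lam : R)
  (step : seq int -> seq (R * seq int)) (s0 : seq int) (t : R)
  (E : pred (seq int)) : R :=
  limn (series (fun k : nat => expR (- (lam * t)) * (lam * t) ^+ k / (k`!)%:R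
                      * probK step k s0 E)).

(* I->_{ij}(t, y) = 1_{]y_j, y_{j+1}]}(X_i(t)), y_j = yk_j + 1/2  (0-indexed) *)
Definition arrayX (m n : nat) (yk : seq int) (X : seq int) : 'M[bool]_(m, n.-1) :=
  \matrix_(i < m, j < n.-1)
    (((nth 0 yk j)%:~R + 1/2 < (nth 0 X i)%:~R :> rat) &&
     ((nth 0 X i)%:~R <= (nth 0 yk j.+1)%:~R + 1/2 :> rat)).

(* I<-_{ij}(t, x) = 1_{]Y_j(t), Y_{j+1}(t)]}(x_i), Y_j = Yk_j + 1/2 *)
Definition arrayY (m n : nat) (x : seq int) (Yk : seq int) : 'M[bool]_(m, n.-1) :=
  \matrix_(i < m, j < n.-1)
    (((nth 0 Yk j)%:~R + 1/2 < (nth 0 x i)%:~R :> rat) &&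
     ((nth 0 x i)%:~R <= (nth 0 Yk j.+1)%:~R + 1/2 :> rat)).

(* If the one-step
   kernel is 1 + L/lam, the k-step law expands binomially in the powers of the
   generator L, and averaging over Poisson(lam t) many steps turns the law of X at
   time t into sum_j t^j/j! (L_X^j H(., y))(x): a Cauchy product with the
   exponential series of lam t, whose value does not depend on lam.  The function
   H(x, y) = 1[the comparison array of x against y is A] is a duality function,
   L_X H(., y)(x) = L_Y H(x, .)(y): moving the X-cluster at z one step right
   changes exactly the comparisons changed by moving the Y-particle at z + 1/2 one
   step left, and absorption of X at a and b matches the blocked crossings of a
   and b by Y.  Iterating gives L_X^j H(., y)(x) = L_Y^j H(x, .)(y), so both
   probabilities equal the same series. *)

From HB Require Import structures.
From mathcomp Require Import all_boot all_order all_algebra.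
From mathcomp Require Import all_classical all_reals all_analysis.
From mathcomp Require Import ring lra zify.
Import Order.TTheory GRing.Theory Num.Theory.
Import numFieldNormedType.Exports.
Local Open Scope classical_set_scope.
Local Open Scope ring_scope.

(** * Cauchy products and Poissonization *)

Section CauchyProduct.
Context {R : realType}.
Implicit Types (a b : nat -> R).

Definition cauchy_product a b (k : nat) : R := \sum_(j < k.+1) a j * b (k - j)%N.

Lemma series_nondecreasing a : (forall k, 0 <= a k) -> nondecreasing_seq (series a).
Proof. by move=> a0; exact: nondecreasing_series. Qed.

Lemma series_cauchy_product a b N :
  series (cauchy_product a b) N = \sum_(j < N) a j * series b (N - j)%N.
Proof.
elim: N => [|N IH]; first by rewrite seriesEord /= !big_ord0.
rewrite seriesSr IH /cauchy_product big_ord_recr /= subnn.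
rewrite [RHS]big_ord_recr /= subSnn addrA -big_split /=.
have -> : series b 1 = b 0%N by rewrite seriesEord /= big_ord1.
congr (_ + _); apply: eq_bigr => j _.
by rewrite subSn ?seriesSr ?mulrDr // ltnW.
Qed.

Lemma cvg_series_cauchy_product_ge0 a b :
  (forall k, 0 <= a k) -> (forall k, 0 <= b k) ->
  cvgn (series a) -> cvgn (series b) ->
  series (cauchy_product a b) @ \oo --> limn (series a) * limn (series b).
Proof.
move=> a0 b0 ca cb; set S := series (cauchy_product a b).
have sa_lim := nondecreasing_cvgn_le (series_nondecreasing _ a0) ca.
have sb_lim := nondecreasing_cvgn_le (series_nondecreasing _ b0) cb.
have sb0 N : 0 <= series b N by rewrite seriesEord; apply: sumr_ge0.
have S_nd : nondecreasing_seq S.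
  by apply: series_nondecreasing => k; apply: sumr_ge0 => j _; exact: mulr_ge0.
have S_le N : S N <= limn (series a) * limn (series b).
  rewrite /S series_cauchy_product; apply: (@le_trans _ _ (series a N * limn (series b))).
    by rewrite (seriesEord a) /= mulr_suml; apply: ler_sum => j _; exact: ler_wpM2l.
  by apply: ler_wpM2r => //; exact: le_trans (sb0 0%N) (sb_lim 0%N).
have S_ge M : series a M * series b M <= S (M + M)%N.
  rewrite /S series_cauchy_product big_split_ord /= -lerBlDl.
  apply: (@le_trans _ _ 0); last by apply: sumr_ge0 => j _; exact: mulr_ge0.
  rewrite subr_le0 (seriesEord a) /= mulr_suml; apply: ler_sum => j _.
  apply: ler_wpM2l => //; apply: series_nondecreasing => //.
  by rewrite leq_subRL ?leq_add2r // (leq_trans (ltnW (ltn_ord j))) ?leq_addr.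
have cS : cvgn S.
  by apply: nondecreasing_is_cvgn => //; exists (limn (series a) * limn (series b)) => _ [N _ <-].
suff <- : limn S = limn (series a) * limn (series b) by [].
apply/le_anti; rewrite limr_le //=; last exact: nearW.
rewrite -limM // limr_le //; first exact: is_cvgM.
apply: nearW => M; apply: le_trans (S_ge M) _.
exact: nondecreasing_cvgn_le.
Qed.

Lemma cvg_series_cauchy_product a b :
  cvgn (series (fun k => `|a k|)) -> (forall k, 0 <= b k) -> cvgn (series b) ->
  series (cauchy_product a b) @ \oo --> limn (series a) * limn (series b).
Proof.
move=> ca b0 cb.
pose ap k := (`|a k| + a k) / 2; pose an k := (`|a k| - a k) / 2.
have a_bound k : - `|a k| <= a k <= `|a k| by rewrite -ler_norml.
have ap0 k : 0 <= ap k by have := a_bound k; rewrite /ap; lra.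
have an0 k : 0 <= an k by have := a_bound k; rewrite /an; lra.
have cap : cvgn (series ap).
  by apply: series_le_cvg ca => // k; have := a_bound k; rewrite /ap; lra.
have can : cvgn (series an).
  by apply: series_le_cvg ca => // k; have := a_bound k; rewrite /an; lra.
have -> : a = ap - an by apply/funext => k; rewrite /ap /an !fctE; field.
have -> : cauchy_product (ap - an) b = cauchy_product ap b - cauchy_product an b.
  apply/funext => k; rewrite /cauchy_product !fctE -sumrB.
  by apply: eq_bigr => j _; rewrite mulrBl.
rewrite seriesD seriesN lim_seriesB // mulrBl.
by apply: cvgB; exact: cvg_series_cauchy_product_ge0.
Qed.

End CauchyProduct.

Section Poissonization.
Context {R : realType}.

Lemma fact_neq0 k : k`!%:R != 0 :> R.
Proof. by rewrite pnatr_eq0 -lt0n fact_gt0. Qed.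

Lemma poisson_binomial (lam t : R) k j : lam != 0 -> (j <= k)%N ->
  (lam * t) ^+ k / k`!%:R * ('C(k, j)%:R * lam^-1 ^+ j)
  = t ^+ j / j`!%:R * ((lam * t) ^+ (k - j) / (k - j)`!%:R).
Proof.
move=> lam0 le_jk; have := bin_fact le_jk; set i := (k - j)%N => bin_k.
have -> : 'C(k, j)%:R = k`!%:R / (j`!%:R * i`!%:R) :> R.
  by rewrite -bin_k !natrM mulfK // mulf_neq0 // fact_neq0.
have -> : k = (j + i)%N by rewrite /i subnKC.
rewrite exprD !exprMn exprVn.
have := fact_neq0 j; have := fact_neq0 i; have := fact_neq0 (j + i).
by move=> fji fi fj; field; rewrite fji fi fj expf_neq0.
Qed.

(* The uniformized series is e^{-lam t} times the Cauchy product of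
   [t^j c_j / j!] with the exponential series of [lam t]. *)
Lemma lim_series_poisson_binomial {lam t C : R} {c : nat -> R} :
  0 < lam -> 0 <= t -> 0 <= C -> (forall j, `|c j| <= C ^+ j) ->
  limn (series (fun k => expR (- (lam * t)) * (lam * t) ^+ k / k`!%:R *
                  \sum_(j < k.+1) 'C(k, j)%:R * lam^-1 ^+ j * c j))
  = limn (series (fun j => t ^+ j / j`!%:R * c j)).
Proof.
move=> lam0 t0 C0 c_bound; pose a j := t ^+ j / j`!%:R * c j.
have a_abs : cvgn (series (fun j => `|a j|)).
  apply: (@series_le_cvg _ _ (exp_coeff (C * t))) => [j|j|j|].
  - exact: normr_ge0.
  - exact: exp_coeff_ge0 (mulr_ge0 C0 t0).
  - rewrite /a normrM ger0_norm ?divr_ge0 ?exprn_ge0 // /exp_coeff /= exprMn.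
    by rewrite mulrC -[X in _ <= X]mulrA ler_wpM2r ?divr_ge0 ?exprn_ge0.
  - exact: is_cvg_series_exp_coeff.
have lamt0 : 0 <= lam * t by rewrite mulr_ge0 // ltW.
have cvg_product := @cvg_series_cauchy_product _ a _ a_abs (fun k => exp_coeff_ge0 k lamt0)
  (is_cvg_series_exp_coeff _).
have -> : (fun k => expR (- (lam * t)) * (lam * t) ^+ k / k`!%:R *
                     \sum_(j < k.+1) 'C(k, j)%:R * lam^-1 ^+ j * c j)
         = expR (- (lam * t)) *: cauchy_product a (exp_coeff (lam * t)).
  apply/funext => k; rewrite !fctE /cauchy_product mulr_sumr scaler_sumr.
  apply: eq_bigr => j _.
  have := @poisson_binomial lam t k j (lt0r_neq0 lam0) (ltn_ord j : (j <= k)%N).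
  rewrite /a /exp_coeff /= => binomial_term.
  transitivity (expR (- (lam * t)) *
    ((lam * t) ^+ k / k`!%:R * ('C(k, j)%:R * lam^-1 ^+ j)) * c j); first by ring.
  by rewrite binomial_term -[X in _ = X]/(_ * _); ring.
rewrite lim_seriesZ; last exact: cvgP cvg_product.
rewrite (cvg_lim _ cvg_product) //= -/(expR (lam * t)) expRN.
by rewrite -[LHS]/(_ * _) mulrCA mulVf ?mulr1 // gt_eqF // expR_gt0.
Qed.

End Poissonization.

(** * Weighted kernels and jump chains *)

Lemma sum_binomialS {R : comPzRingType} (x : R) (v : nat -> R) k :
  \sum_(j < k.+2) 'C(k.+1, j)%:R * x ^+ j * v j
  = \sum_(j < k.+1) 'C(k, j)%:R * x ^+ j * v j
    + x * \sum_(j < k.+1) 'C(k, j)%:R * x ^+ j * v j.+1.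
Proof.
rewrite big_ord_recl [X in _ = X + _]big_ord_recl /=.
under eq_bigr => j _ do rewrite /bump /= add1n binS natrD !mulrDl.
rewrite big_split /= addrA mulr_sumr; congr (_ + _ + _).
- by rewrite !bin0.
- rewrite big_ord_recr /= bin_small // !mul0r addr0.
  by apply: eq_bigr => j _; rewrite /bump /= add1n.
- by apply: eq_bigr => j _; rewrite exprS; ring.
Qed.

Section KernelOperator.
Context {R : realType} {T : Type}.
Implicit Types (w : T -> seq (R * T)) (f g : T -> R).

Definition kernel_op w f (s : T) : R := \sum_(q <- w s) q.1 * f q.2.

Lemma kernel_op_sum w N (u : nat -> R) (h : nat -> T -> R) s :
  kernel_op w (fun s' => \sum_(j < N) u j * h j s') s
  = \sum_(j < N) u j * kernel_op w (h j) s.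
Proof.
rewrite /kernel_op; under eq_bigr => q _ do rewrite mulr_sumr.
rewrite exchange_big /=; apply: eq_bigr => j _; rewrite mulr_sumr.
by apply: eq_bigr => q _; rewrite mulrCA.
Qed.

Lemma iter_kernel_op_binomial {wP wL} {lam : R} :
  (forall f s, kernel_op wP f s = f s + lam^-1 * kernel_op wL f s) ->
  forall k g s, iter k (kernel_op wP) g s
    = \sum_(j < k.+1) 'C(k, j)%:R * lam^-1 ^+ j * iter j (kernel_op wL) g s.
Proof.
move=> wPE; elim=> [|k IH] g s; first by rewrite big_ord1 /= expr0 !mul1r.
rewrite iterS wPE.
have -> : iter k (kernel_op wP) g = fun s' =>
    \sum_(j < k.+1) 'C(k, j)%:R * lam^-1 ^+ j * iter j (kernel_op wL) g s'.
  by apply/funext => s'; exact: IH.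
rewrite (sum_binomialS _ (fun j => iter j (kernel_op wL) g s)) /=.
by rewrite (kernel_op_sum _ _ (fun j => 'C(k, j)%:R * lam^-1 ^+ j)
  (fun j => iter j (kernel_op wL) g)).
Qed.

Lemma iter_kernel_op_bound w (P : pred T) (C : R) g :
  0 <= C ->
  (forall s, P s -> \sum_(q <- w s) `|q.1| <= C /\ all (P \o snd) (w s)) ->
  (forall s, P s -> `|g s| <= 1) ->
  forall j s, P s -> `|iter j (kernel_op w) g s| <= C ^+ j.
Proof.
move=> C0 w_bound g_bound; elim=> [|j IH] s Ps; first by rewrite expr0; exact: g_bound.
have [w_mass w_P] := w_bound s Ps.
rewrite iterS {1}/kernel_op; apply: le_trans (ler_norm_sum _ _ _) _.
apply: (@le_trans _ _ (\sum_(q <- w s) `|q.1| * C ^+ j)).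
  elim: (w s) w_P => [|q l IHl]; first by rewrite !big_nil.
  rewrite /= !big_cons => /andP[Pq Pl]; apply: lerD; last exact: IHl.
  by rewrite normrM ler_wpM2l // IH.
by rewrite -mulr_suml exprS ler_wpM2r ?exprn_ge0.
Qed.

End KernelOperator.

Lemma iter_kernel_op_dual {R : realType} {T1 T2 : Type}
    {w1 : T1 -> seq (R * T1)} {w2 : T2 -> seq (R * T2)} {K : T1 -> T2 -> R} :
  (forall x y, kernel_op w1 (K ^~ y) x = kernel_op w2 (K x) y) ->
  forall j x y, iter j (kernel_op w1) (K ^~ y) x = iter j (kernel_op w2) (K x) y.
Proof.
move=> K_dual j; elim: j K K_dual => [|j IH] K K_dual x y //.
rewrite !iterSr.
have -> : kernel_op w1 (K ^~ y) = fun x' => kernel_op w2 (K x') y.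
  by apply/funext => x'; exact: K_dual.
apply: (IH (fun x' y' => kernel_op w2 (K x') y')) => x1 y1.
rewrite /kernel_op; under eq_bigr => q _ do rewrite mulr_sumr.
rewrite exchange_big /=; apply: eq_bigr => q _.
rewrite -[RHS]/(q.1 * kernel_op w2 (K x1) q.2) -K_dual /kernel_op mulr_sumr.
by apply: eq_bigr => q' _; rewrite mulrCA.
Qed.

Section JumpKernels.
Context {R : realType} {T Z : Type}.
Variables (s : T) (F : seq Z) (up dn : Z -> T).

Definition jump_step (lam : R) : seq (R * T) :=
  (1 - (size F)%:R / lam, s) ::
  flatten [seq [:: ((2 * lam)^-1, up z); ((2 * lam)^-1, dn z)] | z <- F].

Definition jump_gen : seq (R * T) :=
  flatten [seq [:: (2^-1, up z); (2^-1, dn z); (-1, s)] | z <- F].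

Lemma jump_gen_mean (f : T -> R) :
  \sum_(q <- jump_gen) q.1 * f q.2
  = \sum_(z <- F) (2^-1 * (f (up z) - f s) + 2^-1 * (f (dn z) - f s)).
Proof.
rewrite /jump_gen big_flatten /= big_map.
by apply: eq_bigr => z _; rewrite !big_cons big_nil /=; field.
Qed.

Lemma jump_step_mean (lam : R) (f : T -> R) : lam != 0 ->
  \sum_(q <- jump_step lam) q.1 * f q.2
  = f s + lam^-1 * \sum_(q <- jump_gen) q.1 * f q.2.
Proof.
move=> lam0; rewrite jump_gen_mean big_cons big_flatten big_map /=.
rewrite -sum1_size natr_sum mulr_suml mulrBl mul1r mulr_suml -addrA; congr (_ + _).
rewrite mulr_sumr -sumrN -big_split /=; apply: eq_bigr => z _.
by rewrite !big_cons big_nil /=; field.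
Qed.

Lemma jump_gen_mass : \sum_(q <- jump_gen) `|q.1| = 2 * (size F)%:R.
Proof.
rewrite /jump_gen big_flatten /= big_map -sum1_size natr_sum mulr_sumr.
apply: eq_bigr => z _; rewrite !big_cons big_nil /= normrN normr1.
by rewrite ger0_norm ?invr_ge0 ?ler0n //; field.
Qed.

Lemma jump_gen_all (P : pred T) :
  P s -> (forall z, P (up z) && P (dn z)) -> all (P \o snd) jump_gen.
Proof.
move=> Ps Pz; rewrite /jump_gen; elim: F => //= z F' ->.
by rewrite Ps andbT; case/andP: (Pz z) => -> ->.
Qed.

Lemma jump_step_all (P : pred T) (lam : R) :
  P s -> (forall z, P (up z) && P (dn z)) -> all (P \o snd) (jump_step lam).
Proof.
move=> Ps Pz; rewrite /= Ps /=; elim: F => //= z F' ->.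
by rewrite andbT; case/andP: (Pz z) => -> ->.
Qed.

End JumpKernels.

Section JumpChain.
Context {R : realType}.
Implicit Types (step : seq int -> seq (R * seq int)) (P : pred (seq int)).

Lemma distK_mean step k s0 (f : seq int -> R) :
  \sum_(p <- distK step k s0) p.1 * f p.2 = iter k (kernel_op step) f s0.
Proof.
elim: k f => [|k IH] f; first by rewrite /= big_seq1 mul1r.
rewrite iterSr -IH /= big_flatten /= big_map.
apply: eq_bigr => p _; rewrite big_map /kernel_op mulr_sumr.
by apply: eq_bigr => q _ /=; rewrite mulrA.
Qed.

Lemma distK_all P step k s0 :
  P s0 -> (forall s, P s -> all (P \o snd) (step s)) ->
  all (P \o snd) (distK step k s0).
Proof.
move=> P0 step_P; elim: k => [|k IH] /=; first by rewrite P0.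
apply/allP => q /flattenP[_ /mapP[p /(allP IH) /step_P /allP Pstep ->]].
by case/mapP => q' /Pstep Pq' ->.
Qed.

Lemma probK_binomial P step wL (lam : R) k s0 (E : pred (seq int)) (K : seq int -> R) :
  P s0 -> (forall s, P s -> all (P \o snd) (step s)) ->
  (forall s, P s -> (E s)%:R = K s) ->
  (forall f s, kernel_op step f s = f s + lam^-1 * kernel_op wL f s) ->
  probK step k s0 E
  = \sum_(j < k.+1) 'C(k, j)%:R * lam^-1 ^+ j * iter j (kernel_op wL) K s0.
Proof.
move=> P0 step_P EK stepE; rewrite /probK.
rewrite (eq_big_seq (fun p => p.1 * K p.2)); last first.
  by move=> p /(allP (@distK_all P step k s0 P0 step_P)) /EK ->.
by rewrite distK_mean (iter_kernel_op_binomial stepE).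
Qed.

End JumpChain.

(** * Coalescing walks and their duality *)

Section HalfIntegers.
Context {F : realFieldType}.

Lemma ltr_int_addhalf (u v : int) : (u%:~R + 1/2 < v%:~R :> F) = (u < v).
Proof.
have [lt_uv|le_vu] := ltP u v.
  have : (u + 1)%:~R <= v%:~R :> F by rewrite ler_int; lia.
  by rewrite intrD => ?; apply/idP; lra.
have : v%:~R <= u%:~R :> F by rewrite ler_int.
by move=> ?; apply/negbTE; rewrite -leNgt; lra.
Qed.

Lemma ler_int_addhalf (u v : int) : (v%:~R <= u%:~R + 1/2 :> F) = (v <= u).
Proof.
have [le_vu|lt_uv] := leP v u.
  have : v%:~R <= u%:~R :> F by rewrite ler_int.
  by move=> ?; apply/idP; lra.
have : (u + 1)%:~R <= v%:~R :> F by rewrite ler_int; lia.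
by rewrite intrD => ?; apply/negbTE; rewrite -ltNge; lra.
Qed.

End HalfIntegers.

Lemma arrayYE m n (x y : seq int) : arrayY m n x y =
  \matrix_(i < m, j < n.-1) ((nth 0 y j < nth 0 x i) && (nth 0 x i <= nth 0 y j.+1)).
Proof. by apply/matrixP => i j; rewrite !mxE ltr_int_addhalf ler_int_addhalf. Qed.

Lemma moveAt_id s z d : z \notin s -> moveAt s z d = s.
Proof.
move=> zs; apply: map_id_in => w ws.
by case: eqP => // ewz; rewrite -ewz ws in zs.
Qed.

Lemma size_moveAt s z d : size (moveAt s z d) = size s.
Proof. exact: size_map. Qed.

Lemma nth_moveAt s z d i : (i < size s)%N ->
  nth 0 (moveAt s z d) i = if nth 0 s i == z then nth 0 s i + d else nth 0 s i.
Proof. by move=> lt_is; rewrite (nth_map 0). Qed.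

Section ArrayShift.
Variables (m n : nat) (x y : seq int).
Hypotheses (size_x : size x = m) (size_y : size y = n).

Lemma arrayY_moveAt_up z :
  arrayY m n (moveAt x z 1) y = arrayY m n x (moveAt y z (-1)).
Proof.
rewrite !arrayYE; apply/matrixP => i j; rewrite !mxE.
have ltj := ltn_ord j; rewrite !nth_moveAt ?size_x ?size_y //; try lia.
move: (nth 0 x i) (nth 0 y j) (nth 0 y j.+1) => u v w.
by do 3 case: eqP => ?; lia.
Qed.

Lemma arrayY_moveAt_down z :
  arrayY m n (moveAt x z (-1)) y = arrayY m n x (moveAt y (z - 1) 1).
Proof.
rewrite !arrayYE; apply/matrixP => i j; rewrite !mxE.
have ltj := ltn_ord j; rewrite !nth_moveAt ?size_x ?size_y //; try lia.
move: (nth 0 x i) (nth 0 y j) (nth 0 y j.+1) => u v w.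
by do 3 case: eqP => ?; lia.
Qed.

End ArrayShift.

Section Generators.
Context {R : realType}.
Variables (a b : int).

Definition off_ends (z : int) := (z != a) && (z != b).

Definition genX (s : seq int) : seq (R * seq int) :=
  jump_gen s (undup [seq z <- s | off_ends z]) (moveAt s ^~ 1) (moveAt s ^~ (-1)).

Definition reflect_up (s : seq int) (z : int) :=
  if (z + 1 == a) || (z + 1 == b) then s else moveAt s z 1.
Definition reflect_down (s : seq int) (z : int) :=
  if (z == a) || (z == b) then s else moveAt s z (-1).

Definition genY (s : seq int) : seq (R * seq int) :=
  jump_gen s (undup s) (reflect_up s) (reflect_down s).

Lemma stepX_jump_step (lam : R) s :
  stepX a b lam s = jump_step s (undup [seq z <- s | off_ends z])
                      (moveAt s ^~ 1) (moveAt s ^~ (-1)) lam.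
Proof. by []. Qed.

Lemma stepY_jump_step (lam : R) s :
  stepY a b lam s = jump_step s (undup s) (reflect_up s) (reflect_down s) lam.
Proof. by []. Qed.

Lemma genX_mean (f : seq int -> R) x :
  kernel_op genX f x
  = 2^-1 * \sum_(z <- undup x) (if off_ends z then f (moveAt x z 1) - f x else 0)
  + 2^-1 * \sum_(z <- undup x) (if off_ends z then f (moveAt x z (-1)) - f x else 0).
Proof.
rewrite /kernel_op jump_gen_mean -filter_undup big_filter big_mkcond /=.
rewrite !mulr_sumr -big_split /=; apply: eq_bigr => z _.
by case: ifP => _; rewrite ?mulr0 ?addr0.
Qed.

Lemma genY_mean (g : seq int -> R) y :
  kernel_op genY g y
  = 2^-1 * \sum_(z <- undup y) (if off_ends (z + 1) then g (moveAt y z 1) - g y else 0)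
  + 2^-1 * \sum_(z <- undup y) (if off_ends z then g (moveAt y z (-1)) - g y else 0).
Proof.
rewrite /kernel_op jump_gen_mean !mulr_sumr -big_split; apply: eq_bigr => z _.
rewrite /reflect_up /reflect_down /off_ends.
by case: (z + 1 == a); case: (z + 1 == b); case: (z == a); case: (z == b);
  rewrite /= ?subrr ?mulr0.
Qed.

End Generators.

Lemma eq_big_uniq_support {R : zmodType} (f : int -> R) (s1 s2 : seq int) :
  uniq s1 -> uniq s2 -> (forall z, f z != 0 -> (z \in s1) && (z \in s2)) ->
  \sum_(z <- s1) f z = \sum_(z <- s2) f z.
Proof.
move=> uniq1 uniq2 f_supp.
have restrict (s s' : seq int) : (forall z, f z != 0 -> z \in s') ->
    \sum_(z <- s) f z = \sum_(z <- [seq z <- s | z \in s']) f z.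
  move=> supp; rewrite big_filter [RHS]big_mkcond /=; apply: eq_bigr => z _.
  by case: ifP => // zs; apply/eqP; apply: contraFT zs => /supp.
rewrite (restrict s1 s2); last by move=> z /f_supp /andP[].
rewrite [RHS](restrict s2 s1); last by move=> z /f_supp /andP[].
apply: perm_big; apply: uniq_perm; rewrite ?filter_uniq //.
by move=> z; rewrite !mem_filter andbC.
Qed.

Section Duality.
Context {R : realType}.
Variables (a b : int) (m n : nat) (A : 'M[bool]_(m, n.-1)).

(* The size tests make the shift identities below hold for all configurations:
   [arrayY] reads missing entries as 0. *)
Definition dual_indicator (x y : seq int) : R :=
  ((arrayY m n x y == A) && (size x == m) && (size y == n))%:R.

Lemma dual_indicator_moveAt_up x y z :
  dual_indicator (moveAt x z 1) y = dual_indicator x (moveAt y z (-1)).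
Proof.
rewrite /dual_indicator !size_moveAt.
have [/eqP size_x|] := boolP (size x == m); last by rewrite !andbF.
have [/eqP size_y|] := boolP (size y == n); last by rewrite !andbF.
by rewrite arrayY_moveAt_up.
Qed.

Lemma dual_indicator_moveAt_down x y z :
  dual_indicator (moveAt x z (-1)) y = dual_indicator x (moveAt y (z - 1) 1).
Proof.
rewrite /dual_indicator !size_moveAt.
have [/eqP size_x|] := boolP (size x == m); last by rewrite !andbF.
have [/eqP size_y|] := boolP (size y == n); last by rewrite !andbF.
by rewrite arrayY_moveAt_down.
Qed.

Lemma genX_genY_dual x y :
  kernel_op (genX a b) (dual_indicator ^~ y) x
  = kernel_op (genY a b) (dual_indicator x) y.
Proof.
rewrite genX_mean genY_mean addrC; congr (2^-1 * _ + 2^-1 * _).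
- pose F w := if off_ends a b w
    then dual_indicator (moveAt x w (-1)) y - dual_indicator x y else 0.
  rewrite [RHS](eq_bigr (fun z => F (z + 1))); last first.
    by move=> z _; rewrite /F dual_indicator_moveAt_down addrK.
  rewrite -(big_map (fun z => z + 1) xpredT F) /=.
  apply: eq_big_uniq_support; rewrite ?map_inj_uniq ?undup_uniq //; first exact: addIr.
  move=> z; rewrite /F; case: ifP => _; last by rewrite eqxx.
  rewrite mem_undup; have [zx|zx] := boolP (z \in x); last by rewrite moveAt_id ?subrr ?eqxx.
  rewrite dual_indicator_moveAt_down; have [zy|zy] := boolP (z - 1 \in y).
    by move=> _; apply/mapP; exists (z - 1); rewrite ?mem_undup // subrK.
  by rewrite moveAt_id // subrr eqxx.
- under eq_bigr do rewrite dual_indicator_moveAt_up.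
  apply: eq_big_uniq_support; rewrite ?undup_uniq // => z.
  case: ifP => _; last by rewrite eqxx.
  rewrite !mem_undup; have [zy|zy] := boolP (z \in y); last by rewrite moveAt_id ?subrr ?eqxx.
  have [zx|zx] := boolP (z \in x) => //.
  by rewrite -dual_indicator_moveAt_up moveAt_id // subrr eqxx.
Qed.

Lemma probK_stepX (lam : R) k x y : lam != 0 -> size x = m -> size y = n ->
  probK (stepX a b lam) k x (fun X => arrayX m n y X == A)
  = \sum_(j < k.+1) 'C(k, j)%:R * lam^-1 ^+ j *
      iter j (kernel_op (genX a b)) (dual_indicator ^~ y) x.
Proof.
move=> lam0 size_x size_y.
apply: (@probK_binomial _ (fun s => size s == m)); first by rewrite size_x.
- move=> s /eqP size_s; rewrite stepX_jump_step; apply: jump_step_all => [|z].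
    by rewrite size_s.
  by rewrite !size_moveAt size_s eqxx.
- by move=> s /eqP size_s; rewrite /dual_indicator size_s size_y !eqxx !andbT.
- by move=> f s; rewrite /kernel_op stepX_jump_step jump_step_mean.
Qed.

Lemma probK_stepY (lam : R) k x y : lam != 0 -> size x = m -> size y = n ->
  probK (stepY a b lam) k y (fun Y => arrayY m n x Y == A)
  = \sum_(j < k.+1) 'C(k, j)%:R * lam^-1 ^+ j *
      iter j (kernel_op (genY a b)) (dual_indicator x) y.
Proof.
move=> lam0 size_x size_y.
apply: (@probK_binomial _ (fun s => size s == n)); first by rewrite size_y.
- move=> s /eqP size_s; rewrite stepY_jump_step; apply: jump_step_all => [|z].
    by rewrite size_s.
  by rewrite /reflect_up /reflect_down; do 2 case: ifP => _; rewrite ?size_moveAt size_s eqxx.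
- by move=> s /eqP size_s; rewrite /dual_indicator size_s size_x !eqxx !andbT.
- by move=> f s; rewrite /kernel_op stepY_jump_step jump_step_mean.
Qed.

Lemma iter_genX_bound j x y : size x = m ->
  `|iter j (kernel_op (genX a b)) (dual_indicator ^~ y) x| <= (2 * m%:R) ^+ j.
Proof.
move=> size_x.
apply: (@iter_kernel_op_bound _ _ _ (fun s => size s == m)); rewrite ?size_x //.
- move=> s /eqP size_s; split.
    rewrite jump_gen_mass ler_wpM2l ?ler0n // ler_nat -size_s.
    by rewrite (leq_trans (size_undup _)) // size_filter count_size.
  by apply: jump_gen_all => [|z]; rewrite ?size_moveAt size_s eqxx.
- by move=> s _; rewrite /dual_indicator; case: (_ && _); rewrite ?normr1 ?normr0.
Qed.

End Duality.

Theorem proposition3p1 (R : realType) (a b : int) (m n : nat)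
  (x yk : seq int) (t : R) :
  a < b -> size x = m -> size yk = n ->
  sorted <=%R x -> sorted <=%R yk -> 0 <= t ->
  forall A : 'M[bool]_(m, n.-1),
    ctmc_prob (m.+1)%:R (stepX a b (m.+1)%:R) x t
      (fun X => arrayX m n yk X == A)
    = ctmc_prob (n.+1)%:R (stepY a b (n.+1)%:R) yk t
      (fun Y => arrayY m n x Y == A).
Proof.
move=> _ size_x size_yk _ _ t0 A.
pose c j : R := iter j (kernel_op (genX a b)) (dual_indicator m n A ^~ yk) x.
have dual j : iter j (kernel_op (genY a b)) (dual_indicator m n A x) yk = c j.
  by rewrite /c (iter_kernel_op_dual (genX_genY_dual a b m n A)).
have c_bound j : `|c j| <= (2 * m%:R) ^+ j by exact: iter_genX_bound.
rewrite /ctmc_prob.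
under eq_fun => k do rewrite probK_stepX ?pnatr_eq0 //.
under [X in _ = limn (series X)]eq_fun => k do rewrite probK_stepY ?pnatr_eq0 //.
under [X in _ = limn (series X)]eq_fun => k do under eq_bigr => j _ do rewrite dual.
have C0 : 0 <= 2 * m%:R :> R by rewrite mulr_ge0 ?ler0n.
rewrite (lim_series_poisson_binomial _ t0 C0 c_bound) ?ltr0Sn //.
by rewrite (lim_series_poisson_binomial _ t0 C0 c_bound) ?ltr0Sn.
Qed.
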